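(* Let $G$ be a compact group such that for every positive integer $n$ there is exactly one equivalence class of irreducible representations of $G$ of dimension $n$; for $j\in\frac12\mathbb{Z}_{\ge0}$ let $\chi_j$ be the character of the irreducible representation of dimension $2j+1$. Then for every $j\in\frac12\mathbb{Z}_{\ge0}$, $$\chi_j=\chi_{1/2}^{\,2j}+\sum_{i=1}^{\lfloor j\rfloor}(-1)^i\binom{2j-i}{i}\chi_{1/2}^{\,2j-2i},$$ where $\chi_{1/2}^{\,0}=\chi_0$ is the trivial character and powers are pointwise products.
   Context: Representations are continuous finite-dimensional unitary representations on complex Hilbert spaces; characters are $\chi(g)=\mathrm{tr}\,D(g)$. *)

From HB Require Import structures.
From mathcomp Require Import all_boot all_order all_algebra.
From mathcomp Require Import all_classical all_reals all_analysis.
From mathcomp Require Import complex.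
Set Implicit Arguments. Unset Strict Implicit. Unset Printing Implicit Defensive.
Import GRing.Theory Num.Theory.
Local Open Scope ring_scope.
Local Open Scope classical_set_scope.

Record compact_group (G : topologicalType) (mul : G -> G -> G) (inv : G -> G)
    (one : G) : Prop := CompactGroup {
  cg_mulA : forall x y z, mul x (mul y z) = mul (mul x y) z;
  cg_mul1g : forall x, mul one x = x;
  cg_mulVg : forall x, mul (inv x) x = one;
  cg_mul_cont : continuous (fun p : G * G => mul p.1 p.2);
  cg_inv_cont : continuous inv;
  cg_hausdorff : hausdorff_space G;
  cg_compact : compact [set: G] }.

(* A continuous finite-dimensional unitary representation of dimension n on
   C^n (C = R[i], matrices acting on column vectors). *)
Definition unitary_rep (G : topologicalType) (mul : G -> G -> G)
    (R : realType) (n : nat) (D : G -> 'M[R[i]]_n) : Prop :=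
  (forall g h, D (mul g h) = D g *m D h) /\
  (forall g, (map_mx (@conjc R) (D g))^T *m D g = 1%:M) /\
  (forall i j, continuous (fun g => complex.Re (D g i j) : R^o) /\
               continuous (fun g => complex.Im (D g i j) : R^o)).

(* W (spanned by the columns of U^T, i.e. the transposes of the rows of U)
   is invariant under every D g. *)
Definition invariant_subspace (G : Type) (R : realType) (n : nat)
    (D : G -> 'M[R[i]]_n) (U : 'M[R[i]]_n) : Prop :=
  forall g, (U *m (D g)^T <= U)%MS.

Definition irrep (G : topologicalType) (mul : G -> G -> G)
    (R : realType) (n : nat) (D : G -> 'M[R[i]]_n) : Prop :=
  [/\ unitary_rep mul D, (0 < n)%N &
      forall U : 'M[R[i]]_n, invariant_subspace D U ->
        (U == (0 : 'M[R[i]]_n))%MS \/ row_full U].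

Definition rep_equiv (G : Type) (R : realType) (n : nat)
    (D1 D2 : G -> 'M[R[i]]_n) : Prop :=
  exists2 P : 'M[R[i]]_n, P \in unitmx & forall g, P *m D1 g = D2 g *m P.

Definition character (G : Type) (R : realType) (n : nat)
    (D : G -> 'M[R[i]]_n) : G -> R[i] := fun g => \tr (D g).

From HB Require Import structures.
From mathcomp Require Import all_boot all_order all_algebra.
From mathcomp Require Import all_classical all_reals all_analysis.
From mathcomp Require Import complex spectral mxtens zify ring.
Set Implicit Arguments. Unset Strict Implicit. Unset Printing Implicit Defensive.
Import GRing.Theory Num.Theory.
Local Open Scope ring_scope.
Local Open Scope sesquilinear_scope.

(* Write V_n for the irreducible representation of dimension n, unique up to
   equivalence.  By induction on k one proves the Clebsch-Gordan rule
   V_2 (x) V_(k+1) = V_(k+2) (+) V_k, in the form: the characters add up,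
   V_2 (x) V_(k+1) maps nontrivially to no V_b with b > k+2, and its maps to
   V_(k+2) form a line.  For the inductive step, the adjunction
   Hom(V_(k+1), V_2 (x) V_(k+2)) = Hom(conj V_2 (x) V_(k+1), V_(k+2)) and the
   rule at level k produce a copy of V_(k+1) inside V_2 (x) V_(k+2); the rule
   at levels <= k forces every irreducible subrepresentation of dimension
   <= k+1 into that copy, so its orthogonal complement, of dimension k+3, is
   irreducible.  Hence chi_(1/2) chi_j = chi_(j+1/2) + chi_(j-1/2), the
   recursion of the Chebyshev polynomials of the second kind, whose
   coefficients are the signed binomials of the statement.  Unitarity
   supplies the invariant complements. *)

Local Notation "A ^!" := (orthomx Num.conj (mx_of_hermitian (hermitian1mx _)) A)
  : matrix_set_scope.

Section ComplexContinuity.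
Variables (T : topologicalType) (R : realType).

Definition cplx_continuous (f : T -> R[i]) :=
  continuous (fun t => complex.Re (f t) : R^o) /\
  continuous (fun t => complex.Im (f t) : R^o).

Lemma eq_cplx_continuous f h :
  (forall t, f t = h t) -> cplx_continuous f -> cplx_continuous h.
Proof. by move=> e; have -> : f = h by apply: funext. Qed.

Lemma cplx_continuous_cst (c : R[i]) : cplx_continuous (fun _ => c).
Proof. by split; apply: cst_continuous. Qed.

Lemma cplx_continuousD f h : cplx_continuous f -> cplx_continuous h ->
  cplx_continuous (fun t => f t + h t).
Proof.
move=> [f1 f2] [h1 h2]; split.
  have -> : (fun t => complex.Re (f t + h t) : R^o) =
     (fun t => complex.Re (f t) : R^o) + (fun t => complex.Re (h t) : R^o).
    by apply: funext => t; rewrite !fctE /=; case: (f t) => a b; case: (h t).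
  by move=> t; apply: continuousD; [exact: f1 | exact: h1].
have -> : (fun t => complex.Im (f t + h t) : R^o) =
   (fun t => complex.Im (f t) : R^o) + (fun t => complex.Im (h t) : R^o).
  by apply: funext => t; rewrite !fctE /=; case: (f t) => a b; case: (h t).
by move=> t; apply: continuousD; [exact: f2 | exact: h2].
Qed.

Lemma cplx_continuousM f h : cplx_continuous f -> cplx_continuous h ->
  cplx_continuous (fun t => f t * h t).
Proof.
move=> [f1 f2] [h1 h2]; split.
  have -> : (fun t => complex.Re (f t * h t) : R^o) =
     ((fun t => complex.Re (f t) : R^o) \* (fun t => complex.Re (h t) : R^o)) -
     ((fun t => complex.Im (f t) : R^o) \* (fun t => complex.Im (h t) : R^o)).
    by apply: funext => t; rewrite !fctE /=; case: (f t) => a b; case: (h t).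
  by move=> t; apply: continuousB; apply: continuousM;
    [exact: f1 | exact: h1 | exact: f2 | exact: h2].
have -> : (fun t => complex.Im (f t * h t) : R^o) =
   ((fun t => complex.Re (f t) : R^o) \* (fun t => complex.Im (h t) : R^o)) +
   ((fun t => complex.Im (f t) : R^o) \* (fun t => complex.Re (h t) : R^o)).
  by apply: funext => t; rewrite !fctE /=; case: (f t) => a b; case: (h t).
by move=> t; apply: continuousD; apply: continuousM;
  [exact: f1 | exact: h2 | exact: f2 | exact: h1].
Qed.

Lemma cplx_continuousJ f : cplx_continuous f ->
  cplx_continuous (fun t => conjc (f t)).
Proof.
move=> [f1 f2]; split.
  have -> : (fun t => complex.Re (conjc (f t)) : R^o) =
            (fun t => complex.Re (f t) : R^o).
    by apply: funext => t; case: (f t).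
  exact: f1.
have -> : (fun t => complex.Im (conjc (f t)) : R^o) =
          (fun t => - complex.Im (f t) : R^o).
  by apply: funext => t; case: (f t).
by move=> t; apply: continuousN; exact: f2.
Qed.

Lemma cplx_continuous_sum (I : finType) (F : I -> T -> R[i]) :
  (forall i, cplx_continuous (F i)) -> cplx_continuous (fun t => \sum_i F i t).
Proof.
move=> contF; apply: (@eq_cplx_continuous (fun t => \sum_(i <- enum I) F i t)).
  by move=> t; rewrite big_enum.
elim: (enum I) => [|i s IHs].
  by apply: (eq_cplx_continuous _ (cplx_continuous_cst 0)) => t; rewrite big_nil.
by apply: (eq_cplx_continuous _ (cplx_continuousD (contF i) IHs)) => t;
  rewrite big_cons.
Qed.

End ComplexContinuity.

Section TensorIndex.
Variable R : comPzRingType.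

Lemma sum_mxtens_index (V : nmodType) m n (f : 'I_(m * n) -> V) :
  \sum_k f k = \sum_i \sum_j f (mxtens_index (i, j)).
Proof.
rewrite pair_big /= (reindex (@mxtens_index m n)) /=.
  by apply: eq_bigr => -[i j].
by exists (@mxtens_unindex m n) => k _; rewrite (mxtens_indexK, mxtens_unindexK).
Qed.

Lemma tensmx11 m n : (1%:M : 'M[R]_m) *t (1%:M : 'M[R]_n) = 1%:M.
Proof.
apply/matrixP => k l.
case: (mxtens_indexP k) => i j; case: (mxtens_indexP l) => i' j'.
rewrite tensmxE !mxE (can_eq (@mxtens_indexK m n)) xpair_eqE.
by case: (i == i'); case: (j == j'); rewrite ?mulr1 ?mulr0.
Qed.

Lemma mxtrace_tens m n (A : 'M[R]_m) (B : 'M[R]_n) :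
  \tr (A *t B) = \tr A * \tr B.
Proof.
rewrite /mxtrace sum_mxtens_index big_distrl /=; apply: eq_bigr => i _.
by rewrite big_distrr /=; apply: eq_bigr => j _; rewrite tensmxE.
Qed.

End TensorIndex.

Section UnitaryMatrices.
Variable C : numClosedFieldType.

Lemma unitmx_neq0 n (Q : 'M[C]_n.+1) : Q \in unitmx -> Q != 0.
Proof. by move/mxrank_unit; apply: contra_eqN => /eqP ->; rewrite mxrank0. Qed.

Lemma trmxC_mul m n p (A : 'M[C]_(m, n)) (B : 'M[C]_(n, p)) :
  (A *m B)^t* = B^t* *m A^t*.
Proof. by rewrite trmx_mul map_mxM. Qed.

Lemma trmxC_tens m n p q (A : 'M[C]_(m, n)) (B : 'M[C]_(p, q)) :
  (A *t B)^t* = A^t* *t B^t*.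
Proof. by rewrite trmx_tens map_mxT. Qed.

Lemma unitarymx_tCmul n (M : 'M[C]_n) : M \is unitarymx -> M^t* *m M = 1%:M.
Proof. by rewrite -trmxC_unitary => /unitarymxP; rewrite trmxCK. Qed.

Lemma unitary_projK m r n (P : 'M[C]_(r, n)) (x : 'M[C]_(m, n)) :
  P \is unitarymx -> (x <= P)%MS -> x *m P^t* *m P = x.
Proof. by move=> Pu /submxP [y ->]; rewrite -(mulmxA y) (unitarymxP Pu) mulmx1. Qed.

Lemma unitary_splitting n k (W : 'M[C]_(k, n)) :
  exists r1 r2 (P1 : 'M[C]_(r1, n)) (P2 : 'M[C]_(r2, n)),
  [/\ r1 = \rank W, (r1 + r2 = n)%N, P1 \is unitarymx, P2 \is unitarymx &
      [/\ P1^t* *m P1 + P2^t* *m P2 = 1%:M, (P1 :=: W)%MS &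
          (P2 :=: W^!)%MS]].
Proof.
exists (\rank W), (\rank W^!)%MS, (schmidt (row_base W)),
  (schmidt (row_base W^!)%MS).
split=> //; last split.
- exact: add_rank_ortho.
- exact: schmidt_unitarymx (rank_leq_col _).
- exact: schmidt_unitarymx (rank_leq_col _).
- have := mulmxKtV (1%:M : 'M[C]_n) (schmidt_complete_unitarymx W) (add_rank_ortho W).
  by rewrite mul1mx /schmidt_complete tr_col_mx map_row_mx mul_row_col.
- exact: eqmx_trans (eqmx_schmidt_free (row_base_free _)) (eq_row_base _).
- exact: eqmx_trans (eqmx_schmidt_free (row_base_free _)) (eq_row_base _).
Qed.

End UnitaryMatrices.

(* A matrix X : 'M_(a, p * b) is viewed as a family of a slices of shape
   (p, b), and [tens_reshape X] stacks the same slices as p * a rows. *)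
Section TensorReshape.
Variables (R : comPzRingType) (p a b : nat).

Definition tens_slice (X : 'M[R]_(a, p * b)) (i : 'I_a) : 'M[R]_(p, b) :=
  \matrix_(s, j) X i (mxtens_index (s, j)).

Definition tens_block (Z : 'M[R]_(p * a, b)) (i : 'I_a) : 'M[R]_(p, b) :=
  \matrix_(s, j) Z (mxtens_index (s, i)) j.

Definition tens_reshape (X : 'M[R]_(a, p * b)) : 'M[R]_(p * a, b) :=
  \matrix_(k, j) X (mxtens_unindex k).2 (mxtens_index ((mxtens_unindex k).1, j)).

Definition tens_unreshape (Z : 'M[R]_(p * a, b)) : 'M[R]_(a, p * b) :=
  \matrix_(i, l) Z (mxtens_index ((mxtens_unindex l).1, i)) (mxtens_unindex l).2.

Lemma tens_sliceP (X Y : 'M[R]_(a, p * b)) :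
  (forall i, tens_slice X i = tens_slice Y i) -> X = Y.
Proof.
move=> eXY; apply/matrixP => i l; case: (mxtens_indexP l) => s j.
by have /matrixP/(_ s j) := eXY i; rewrite !mxE.
Qed.

Lemma tens_blockP (Z W : 'M[R]_(p * a, b)) :
  (forall i, tens_block Z i = tens_block W i) -> Z = W.
Proof.
move=> eZW; apply/matrixP => k j; case: (mxtens_indexP k) => s i.
by have /matrixP/(_ s j) := eZW i; rewrite !mxE.
Qed.

Lemma tens_block_reshape X i : tens_block (tens_reshape X) i = tens_slice X i.
Proof. by apply/matrixP => s j; rewrite !mxE mxtens_indexK. Qed.

Lemma tens_reshapeK : cancel tens_reshape tens_unreshape.
Proof.
move=> X; apply: tens_sliceP => i; apply/matrixP => s j.
by rewrite !mxE !mxtens_indexK.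
Qed.

Lemma tens_unreshapeK : cancel tens_unreshape tens_reshape.
Proof.
move=> Z; apply: tens_blockP => i; rewrite tens_block_reshape.
by apply/matrixP => s j; rewrite !mxE !mxtens_indexK.
Qed.

Lemma tens_reshape_inj : injective tens_reshape.
Proof. exact: can_inj tens_reshapeK. Qed.

Lemma tens_reshapeZ c X : tens_reshape (c *: X) = c *: tens_reshape X.
Proof. by apply/matrixP => k j; rewrite !mxE. Qed.

Lemma tens_reshape0 : tens_reshape 0 = 0.
Proof. by apply/matrixP => k j; rewrite !mxE. Qed.

Lemma tens_slice_mull (A : 'M[R]_a) X i :
  tens_slice (A *m X) i = \sum_i' A i i' *: tens_slice X i'.
Proof.
by apply/matrixP => s j; rewrite !mxE summxE; apply: eq_bigr => i' _; rewrite !mxE.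
Qed.

Lemma tens_slice_mulr (F : 'M[R]_p) (B : 'M[R]_b) X i :
  tens_slice (X *m (F *t B)) i = F^T *m tens_slice X i *m B.
Proof.
apply/matrixP => s j; rewrite !mxE sum_mxtens_index.
under [RHS]eq_bigr => j' _ do rewrite mxE big_distrl /=.
rewrite exchange_big /=; apply: eq_bigr => s' _; apply: eq_bigr => j' _.
by rewrite tensmxE !mxE mulrCA mulrA.
Qed.

Lemma tens_block_mulr (B : 'M[R]_b) Z i :
  tens_block (Z *m B) i = tens_block Z i *m B.
Proof.
by apply/matrixP => s j; rewrite !mxE; apply: eq_bigr => j' _; rewrite mxE.
Qed.

Lemma tens_block_mull (M : 'M[R]_p) (A : 'M[R]_a) Z i :
  tens_block ((M *t A) *m Z) i = M *m \sum_i' A i i' *: tens_block Z i'.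
Proof.
apply/matrixP => t j; rewrite !mxE sum_mxtens_index; apply: eq_bigr => s _.
rewrite summxE big_distrr /=; apply: eq_bigr => i' _.
by rewrite tensmxE !mxE mulrA.
Qed.

End TensorReshape.

Section Chebyshev.
Variables (K : comPzRingType) (x : K).

Definition cheb_term n i : K := (-1) ^+ i * ('C(n - i, i))%:R * x ^+ (n - 2 * i).

(* [cheb n] is the Chebyshev polynomial U_n of the second kind at x / 2. *)
Definition cheb n := \sum_(i < n.+1) cheb_term n i.

Lemma cheb_term_small n i : (n < 2 * i)%N -> cheb_term n i = 0.
Proof. by move=> lt_n; rewrite /cheb_term bin_small ?mulr0 ?mul0r //; lia. Qed.

Lemma cheb_term0 n : cheb_term n 0 = x ^+ n.
Proof. by rewrite /cheb_term expr0 mul1r subn0 bin0 mul1r ?muln0 ?subn0. Qed.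

Lemma cheb_termSS k i :
  cheb_term k.+2 i.+1 = x * cheb_term k.+1 i.+1 - cheb_term k i.
Proof.
have [lt_k|le_k] := ltnP k (2 * i).
  by rewrite !cheb_term_small ?mulr0 ?subr0 //; lia.
rewrite /cheb_term.
have -> : (k.+2 - i.+1 = (k - i).+1)%N by lia.
have -> : (k.+2 - 2 * i.+1 = k - 2 * i)%N by lia.
have -> : (k.+1 - i.+1 = k - i)%N by lia.
rewrite binS natrD.
have [lt_i|le_k'] := ltnP (2 * i) k.
  have -> : (k - 2 * i = (k.+1 - 2 * i.+1).+1)%N by lia.
  by rewrite !exprS; ring.
by rewrite (@bin_small _ i.+1) ?mulr0n ?exprS; [ring | lia].
Qed.

Lemma cheb0 : cheb 0 = 1.
Proof. by rewrite /cheb big_ord1 cheb_term0. Qed.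

Lemma cheb1 : cheb 1 = x.
Proof. by rewrite /cheb big_ord_recl big_ord1 cheb_term0 cheb_term_small ?addr0. Qed.

Lemma chebSS k : cheb k.+2 = x * cheb k.+1 - cheb k.
Proof.
have e1 : \sum_(i < k.+2) cheb_term k.+1 i.+1 =
          \sum_(i < k.+1) cheb_term k.+1 (bump 0 i).
  by rewrite big_ord_recr /= cheb_term_small ?addr0 //; lia.
have e2 : \sum_(i < k.+2) cheb_term k i = \sum_(i < k.+1) cheb_term k i.
  by rewrite big_ord_recr /= (cheb_term_small (i := k.+1)) ?addr0 //; lia.
rewrite /cheb big_ord_recl [in x * _]big_ord_recl.
under eq_bigr => i _ do rewrite cheb_termSS.
by rewrite sumrB -mulr_sumr e1 e2 !cheb_term0 exprS; ring.
Qed.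

Lemma cheb_half_sum n :
  cheb n = x ^+ n + \sum_(1 <= i < (n./2).+1) cheb_term n i.
Proof.
have n_half : (n./2 * 2 <= n <= n./2 * 2 + 1)%N.
  by have := odd_double_half n; rewrite -muln2; case: (odd n) => /=; lia.
rewrite /cheb -(big_mkord xpredT (cheb_term n)) big_ltn // cheb_term0.
congr (_ + _).
rewrite (big_cat_nat (n := (n./2).+1)) //=; last by lia.
rewrite [X in _ + X]big1_seq ?addr0 // => i /andP[_].
by rewrite mem_index_iota => /andP[le_i _]; apply: cheb_term_small; lia.
Qed.

End Chebyshev.

Section Representations.
Variables (G : topologicalType) (mul : G -> G -> G) (R : realType).
Local Notation C := R[i].

(* Representations act on row vectors, [x |-> x *m M g]: these are the
   transposes of the representations of the statement, and their invariant
   subspaces are row spaces. *)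
Definition urep n (M : G -> 'M[C]_n) : Prop :=
  [/\ forall g h, M (mul g h) = M h *m M g,
      forall g, M g \is unitarymx &
      forall i j, cplx_continuous (fun g => M g i j)].

Definition invariant n (M : G -> 'M[C]_n) m (U : 'M[C]_(m, n)) :=
  forall g, (U *m M g <= U)%MS.

Definition irr n (M : G -> 'M[C]_n) : Prop :=
  [/\ urep M, (0 < n)%N &
      forall U : 'M[C]_n, invariant M U -> U = 0 \/ row_full U].

Definition intertwiner a b (A : G -> 'M[C]_a) (B : G -> 'M[C]_b) X :=
  forall g, A g *m X = X *m B g.

Lemma irrep_irr_tr n (D : G -> 'M[C]_n) : irrep mul D -> irr (fun g => (D g)^T).
Proof.
case=> [[Dmul [Du Dcont]] n_gt0 Dirr]; split=> //.
- split=> [g h|g|i j]; first by rewrite Dmul trmx_mul.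
  + apply/unitarymxP; rewrite trmxK.
    by have := congr1 trmx (Du g); rewrite trmx_mul trmxK trmx1.
  + by apply: (eq_cplx_continuous _ (Dcont j i)) => g; rewrite mxE.
- by move=> U HU; case: (Dirr U HU) => [/eqmx0P|]; [left|right].
Qed.

Lemma irr_irrep_tr n (M : G -> 'M[C]_n) : irr M -> irrep mul (fun g => (M g)^T).
Proof.
case=> [[Mmul Mu Mcont] n_gt0 Mirr]; split=> //.
- split; first by move=> g h; rewrite Mmul trmx_mul.
  split=> [g|i j].
  + by have /unitarymxP/(congr1 trmx) := Mu g; rewrite trmx_mul trmx1.
  + by apply: (eq_cplx_continuous _ (Mcont j i)) => g; rewrite mxE.
- move=> U HU; have HU' : invariant M U by move=> g; have := HU g; rewrite trmxK.
  by case: (Mirr U HU') => [->|]; [left; apply/eqmx0P|right].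
Qed.

Lemma rep_equiv_intertwiner n (D1 D2 : G -> 'M[C]_n) : rep_equiv D1 D2 ->
  exists2 Q, Q \in unitmx &
    intertwiner (fun g => (D1 g)^T) (fun g => (D2 g)^T) Q.
Proof.
case=> P Pu HP; exists P^T; first by rewrite unitmx_tr.
by move=> g; rewrite -!trmx_mul HP.
Qed.

Lemma eqmx_invariant n (M : G -> 'M[C]_n) m1 m2 (U : 'M[C]_(m1, n))
    (V : 'M[C]_(m2, n)) :
  (U :=: V)%MS -> invariant M U -> invariant M V.
Proof.
move=> eqUV HU g; have /andP[UV VU] : (U == V)%MS by apply/eqmxP.
exact: submx_trans (submxMr (M g) VU) (submx_trans (HU g) UV).
Qed.

Lemma irr_invariant n (M : G -> 'M[C]_n) m (X : 'M[C]_(m, n)) :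
  irr M -> invariant M X -> X = 0 \/ row_full X.
Proof.
move=> [_ _ Mirr] /(eqmx_invariant (eqmx_sym (genmxE X))) /Mirr [X0|].
  by left; apply/eqP; rewrite -mxrank_eq0 -mxrank_gen X0 mxrank0.
by rewrite /row_full mxrank_gen; right.
Qed.

Section Intertwiners.
Variables (a b d : nat) (A : G -> 'M[C]_a) (B : G -> 'M[C]_b) (D : G -> 'M[C]_d).

Lemma intertwiner_ker X : intertwiner A B X -> invariant A (kermx X).
Proof.
by move=> HX g; apply/sub_kermxP; rewrite -mulmxA HX mulmxA mulmx_ker mul0mx.
Qed.

Lemma intertwiner_img X : intertwiner A B X -> invariant B X.
Proof. by move=> HX g; rewrite -HX submxMl. Qed.

Lemma intertwinerB X Y :
  intertwiner A B X -> intertwiner A B Y -> intertwiner A B (X - Y).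
Proof. by move=> HX HY g; rewrite mulmxBr mulmxBl HX HY. Qed.

Lemma intertwinerM X Y :
  intertwiner A B X -> intertwiner B D Y -> intertwiner A D (X *m Y).
Proof. by move=> HX HY g; rewrite mulmxA HX -mulmxA HY mulmxA. Qed.

Lemma intertwiner_tC X g : A g \is unitarymx -> B g \is unitarymx ->
  intertwiner A B X -> B g *m X^t* = X^t* *m A g.
Proof.
move=> Au Bu HX.
suff e : X *m (B g)^t* = (A g)^t* *m X.
  by have := congr1 (fun M => M^t*) e; rewrite !trmxC_mul !trmxCK.
have : (A g)^t* *m (A g *m X) *m (B g)^t* = (A g)^t* *m X.
  by rewrite HX -mulmxA mulmxtVK.
by rewrite mulmxA unitarymx_tCmul // mul1mx.
Qed.

Lemma irr_intertwiner_row_free X : irr A -> intertwiner A B X -> X != 0 ->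
  row_free X.
Proof.
move=> irrA HX Xn0; rewrite -kermx_eq0.
case: (irr_invariant irrA (intertwiner_ker HX)) => [->//|fullK].
move/negP: Xn0; case; apply/eqP.
by have /sub_kermxP := submx_full 1%:M fullK; rewrite mul1mx.
Qed.

Lemma irr_intertwiner_eq0 X : irr A -> irr B -> intertwiner A B X ->
  a != b -> X = 0.
Proof.
move=> irrA irrB HX; apply: contraNeq => Xn0.
have /eqP <- := irr_intertwiner_row_free irrA HX Xn0.
case: (irr_invariant irrB (intertwiner_img HX)) => [X0|/eqP -> //].
by rewrite X0 eqxx in Xn0.
Qed.

End Intertwiners.

Lemma intertwiner_scalar n (A : G -> 'M[C]_n) c : intertwiner A A c%:M.
Proof. by move=> g; rewrite scalar_mxC. Qed.

Lemma schur_scalar n (A : G -> 'M[C]_n) X :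
  irr A -> intertwiner A A X -> exists c, X = c%:M.
Proof.
move=> irrA HX; have [_ n_gt0 _] := irrA.
have [c eigc] := eigenvalue_closed X n_gt0.
exists c; apply/eqP; rewrite -subr_eq0; apply/eqP.
have HXc := intertwinerB HX (intertwiner_scalar A c).
case: (irr_invariant irrA (intertwiner_ker HXc)) => [/eqP|fullK].
  by move/negP: eigc.
by have /sub_kermxP := submx_full 1%:M fullK; rewrite mul1mx.
Qed.

Lemma irr_intertwiner_line n (A B : G -> 'M[C]_n) Q X :
  irr A -> intertwiner A B Q -> Q \in unitmx -> intertwiner A B X ->
  exists c, X = c *: Q.
Proof.
move=> irrA HQ Qu HX.
have HQV : intertwiner B A (invmx Q).
  by move=> g; rewrite -[LHS](mulKmx Qu) (mulmxA Q) -HQ mulmxK.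
have [c Hc] := schur_scalar irrA (intertwinerM HX HQV).
by exists c; rewrite -mul_scalar_mx -Hc mulmxKV.
Qed.

Lemma intertwiner_mxtrace n (A B : G -> 'M[C]_n) Q g :
  intertwiner A B Q -> Q \in unitmx -> \tr (A g) = \tr (B g).
Proof.
move=> HQ Qu; have -> : B g = invmx Q *m A g *m Q by rewrite -mulmxA HQ mulKmx.
by rewrite mxtrace_mulC mulmxA mulmxV // mul1mx.
Qed.

Lemma invariant_ortho n (M : G -> 'M[C]_n) m (U : 'M[C]_(m, n)) :
  (forall g, M g \is unitarymx) -> invariant M U -> invariant M U^!%MS.
Proof.
move=> Mu HU g.
have : (U <= U *m M g)%MS.
  rewrite -(mxrank_leqif_sup (HU g)).
  by rewrite mxrankMfree // row_free_unit unitarymx_unit.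
case/submxP => Y eY.
have e : U^t* = (M g)^t* *m U^t* *m Y^t* by rewrite {1}eY !trmxC_mul ?mulmxA.
have orthoU : U^!%MS *m U^t* = 0 by apply/orthomx1P.
apply/orthomx1P; rewrite e !mulmxA -(mulmxA _ (M g)) (unitarymxP (Mu g)).
by rewrite mulmx1 orthoU !mul0mx.
Qed.

Definition subrep n (M : G -> 'M[C]_n) r (P : 'M[C]_(r, n)) :=
  fun g => P *m M g *m P^t*.

Lemma subrep_intertwiner n (M : G -> 'M[C]_n) r (P : 'M[C]_(r, n)) :
  P \is unitarymx -> invariant M P -> intertwiner (subrep M P) M P.
Proof. by move=> Pu HP g; rewrite /subrep unitary_projK. Qed.

Lemma subrep_urep n (M : G -> 'M[C]_n) r (P : 'M[C]_(r, n)) :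
  urep M -> P \is unitarymx -> invariant M P -> urep (subrep M P).
Proof.
move=> [Mmul Mu Mcont] Pu HP; have HPM := subrep_intertwiner Pu HP.
split=> [g h|g|i j].
- by rewrite /subrep Mmul !mulmxA -HPM mulmxtVK.
- apply/unitarymxP; rewrite /subrep !trmxC_mul trmxCK !mulmxA.
  by rewrite unitary_projK // mulmxtVK // (unitarymxP Pu).
- apply: (@eq_cplx_continuous _ _
    (fun g => \sum_l (\sum_k P i k * M g k l) * P^t* l j)).
    by move=> g; rewrite /subrep [RHS]mxE; apply: eq_bigr => l _; rewrite [in RHS]mxE.
  apply: cplx_continuous_sum => l; apply: cplx_continuousM;
    last exact: cplx_continuous_cst.
  apply: cplx_continuous_sum => k.
  by apply: cplx_continuousM; [exact: cplx_continuous_cst | exact: Mcont].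
Qed.

Lemma invariant_irr_sub n (M : G -> 'M[C]_n) s (S : 'M[C]_(s, n)) :
  urep M -> invariant M S -> S != 0 ->
  exists d (D : G -> 'M[C]_d) (psi : 'M[C]_(d, n)),
    [/\ irr D, (d <= \rank S)%N, intertwiner D M psi, psi != 0 & (psi <= S)%MS].
Proof.
move=> repM; have [k ltSk] := ubnP (\rank S).
elim: k s S ltSk => // k IHk s S ltSk HS Sn0.
pose P := schmidt (row_base S).
have Pu : P \is unitarymx by apply: schmidt_unitarymx; apply: rank_leq_col.
have eqPS : (P :=: S)%MS.
  exact: eqmx_trans (eqmx_schmidt_free (row_base_free S)) (eq_row_base S).
have HP : invariant M P := eqmx_invariant (eqmx_sym eqPS) HS.
have rankP : \rank P = \rank S by rewrite mxrank_unitary.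
have HPM := subrep_intertwiner Pu HP.
have [irrP|] := pselect (forall U : 'M[C]_(\rank S),
                   invariant (subrep M P) U -> U = 0 \/ row_full U).
  exists (\rank S), (subrep M P), P; split=> //.
  - by split; [exact: subrep_urep | rewrite lt0n mxrank_eq0 |].
  - by rewrite -mxrank_eq0 rankP mxrank_eq0.
  - by rewrite eqPS.
move/existsNP => [U /not_implyP [HU /not_orP [Un0 /negP Unfull]]].
have HUP : invariant M (U *m P).
  by move=> g; rewrite -mulmxA -HPM mulmxA submxMr // HU.
have rankUP : \rank (U *m P) = \rank U by rewrite mxrankMfree // /row_free rankP.
have ltU : (\rank U < \rank S)%N by rewrite ltn_neqAle rank_leq_col andbT.
have UPn0 : U *m P != 0 by rewrite -mxrank_eq0 rankUP mxrank_eq0; apply/eqP.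
have [|d [D [psi [irrD le_d Hpsi psin0 psiUP]]]] := IHk _ (U *m P) _ HUP UPn0.
  by rewrite rankUP; apply: leq_trans ltU _; rewrite -ltnS.
exists d, D, psi; split=> //.
  by apply: leq_trans le_d _; rewrite rankUP ltnW.
by apply: submx_trans psiUP _; rewrite -eqPS submxMl.
Qed.

Lemma exists_small_invariant n (M : G -> 'M[C]_n) (U : 'M[C]_n) :
  (forall g, M g \is unitarymx) -> invariant M U -> U != 0 -> ~~ row_full U ->
  exists2 X : 'M[C]_n, invariant M X & X != 0 /\ (2 * \rank X <= n)%N.
Proof.
move=> Mu HU Un0 Unfull.
have rankU_lt : (\rank U < n)%N by rewrite ltn_neqAle rank_leq_col andbT.
have [le_U|lt_U] := leqP (2 * \rank U)%N n; first by exists U.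
exists U^!%MS; first exact: invariant_ortho.
rewrite -mxrank_eq0 !rank_ortho subn_eq0 -ltnNge; split=> //.
by move: (\rank U) lt_U => r; lia.
Qed.

Definition tens_rep p a (F : G -> 'M[C]_p) (A : G -> 'M[C]_a) :=
  fun g => F g *t A g.

Lemma tens_urep p a (F : G -> 'M[C]_p) (A : G -> 'M[C]_a) :
  urep F -> urep A -> urep (tens_rep F A).
Proof.
move=> [Fmul Fu Fcont] [Amul Au Acont]; split=> [g h|g|k l].
- by rewrite /tens_rep Fmul Amul tensmx_mul.
- apply/unitarymxP; rewrite /tens_rep trmxC_tens tensmx_mul.
  by rewrite (unitarymxP (Fu g)) (unitarymxP (Au g)) tensmx11.
- apply: (@eq_cplx_continuous _ _ (fun g =>
     F g (mxtens_unindex k).1 (mxtens_unindex l).1 *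
     A g (mxtens_unindex k).2 (mxtens_unindex l).2)).
    by move=> g; rewrite mxE.
  by apply: cplx_continuousM; [apply: Fcont | apply: Acont].
Qed.

Definition conj_rep n (F : G -> 'M[C]_n) := fun g => map_mx Num.conj (F g).

Lemma conj_irr n (F : G -> 'M[C]_n) : irr F -> irr (conj_rep F).
Proof.
move=> irrF; have [[Fmul Fu Fcont] n_gt0 _] := irrF; split=> //.
- split=> [g h|g|i j]; first by rewrite /conj_rep Fmul map_mxM.
  + by rewrite /conj_rep conjC_unitary.
  + apply: (@eq_cplx_continuous _ _ (fun g => conjc (F g i j))).
      by move=> g; rewrite /conj_rep mxE.
    exact: cplx_continuousJ.
- move=> U HU.
  have HUc : invariant F (map_mx Num.conj U).
    by move=> g; rewrite -[F g]map_mxCK -map_mxM map_submx; exact: HU.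
  case: (irr_invariant irrF HUc) => [U0|fullU].
    by left; apply/eqP; rewrite -(map_mx_eq0 Num.conj) U0.
  by right; rewrite -(row_full_map Num.conj).
Qed.

(* Hom(A, F (x) B) = Hom(conj F (x) A, B) for unitary F. *)
Lemma intertwiner_tens_adjoint p a b (F : G -> 'M[C]_p) (A : G -> 'M[C]_a)
    (B : G -> 'M[C]_b) X :
  (forall g, F g \is unitarymx) ->
  intertwiner A (tens_rep F B) X <->
  intertwiner (tens_rep (conj_rep F) A) B (tens_reshape X).
Proof.
move=> Fu.
have FtK g : (F g)^T *m conj_rep F g = 1%:M.
  have := congr1 trmx (unitarymx_tCmul (Fu g)).
  by rewrite trmx_mul map_trmx trmxK trmx1.
have FtV g : conj_rep F g *m (F g)^T = 1%:M.
  have := congr1 trmx (unitarymxP (Fu g)).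
  by rewrite trmx_mul trmx1 map_trmx trmxK.
split=> HX g.
- apply: tens_blockP => i; rewrite tens_block_mull tens_block_mulr.
  under eq_bigr => i' _ do rewrite tens_block_reshape.
  rewrite tens_block_reshape -tens_slice_mull HX tens_slice_mulr.
  by rewrite !mulmxA FtV mul1mx.
- apply: tens_sliceP => i; rewrite tens_slice_mull tens_slice_mulr.
  have := congr1 (fun Z => tens_block Z i) (HX g).
  rewrite tens_block_mull tens_block_mulr tens_block_reshape.
  under eq_bigr => i' _ do rewrite tens_block_reshape.
  by move=> e; rewrite -mulmxA -e mulmxA FtK mul1mx.
Qed.

Lemma irr_trivial : irr (fun _ => 1%:M : 'M[C]_1).
Proof.
split=> //.
- split=> [g h|g|i j]; first by rewrite mulmx1.
  + by apply/unitarymxP; rewrite trmx1 map_mx1 mulmx1.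
  + exact: cplx_continuous_cst.
- move=> U _; have [->|Un0] := eqVneq U 0; [by left | right].
  by rewrite /row_full eqn_leq rank_leq_col lt0n mxrank_eq0.
Qed.

Section ClebschGordan.
Hypothesis irr_exists : forall n, (0 < n)%N -> exists M : G -> 'M[C]_n, irr M.
Hypothesis irr_unique : forall n (M1 M2 : G -> 'M[C]_n),
  irr M1 -> irr M2 -> exists2 Q, Q \in unitmx & intertwiner M1 M2 Q.

Lemma irr_mxtrace n (M1 M2 : G -> 'M[C]_n) g :
  irr M1 -> irr M2 -> \tr (M1 g) = \tr (M2 g).
Proof.
by move=> irr1 irr2; have [Q Qu HQ] := irr_unique irr1 irr2;
  exact: intertwiner_mxtrace HQ Qu.
Qed.

Lemma irr1_trivial (A : G -> 'M[C]_1) g : irr A -> A g = 1%:M.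
Proof.
move=> irrA; have [Q Qu HQ] := irr_unique irrA irr_trivial.
by rewrite -[A g]mulmx1 -(mulmxV Qu) mulmxA HQ mulmx1 mulmxV.
Qed.

(* V_2 (x) V_(k+1) = V_(k+2) (+) V_k; the first clause is void for k = 0. *)
Definition clebsch_gordan k :=
  forall (F : G -> 'M[C]_2) (A : G -> 'M[C]_k.+1), irr F -> irr A ->
  [/\ forall (B : G -> 'M[C]_k.+2) (D : G -> 'M[C]_k) g,
        irr B -> irr D -> \tr (tens_rep F A g) = \tr (B g) + \tr (D g),
      forall b (B : G -> 'M[C]_b) Y, irr B -> (k.+2 < b)%N ->
        intertwiner (tens_rep F A) B Y -> Y = 0 &
      forall B : G -> 'M[C]_k.+2, irr B ->
        exists2 Y0, Y0 != 0 & intertwiner (tens_rep F A) B Y0 /\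
          forall Y, intertwiner (tens_rep F A) B Y -> exists c, Y = c *: Y0].

Lemma clebsch_gordan0 : clebsch_gordan 0.
Proof.
move=> F A irrF irrA.
have eFA g : tens_rep F A g = F g.
  rewrite /tens_rep irr1_trivial //.
  apply/matrixP => i j; rewrite !mxE !ord1 eqxx mulr1.
  by congr (F g _ _); apply: val_inj; rewrite /= divn1.
have intwF b (B : G -> 'M[C]_b) Y :
    intertwiner (tens_rep F A) B Y -> intertwiner F B Y.
  by move=> HY g; rewrite -eFA.
split=> [B D g _ []//|b B Y irrB lt_b /intwF HY|B irrB].
  by apply: (irr_intertwiner_eq0 irrF irrB HY); rewrite neq_ltn lt_b.
have [Q Qu HQ] := irr_unique irrF irrB.
exists Q; first exact: unitmx_neq0.
split; first by move=> g; rewrite eFA.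
by move=> Y /intwF HY; apply: (irr_intertwiner_line irrF HQ Qu HY).
Qed.

Section Adjoint.
Variables (k : nat) (F : G -> 'M[C]_2) (D : G -> 'M[C]_k.+1).
Hypotheses (cg_k : clebsch_gordan k) (irrF : irr F) (irrD : irr D).

Let Fu g : F g \is unitarymx. Proof. by case: irrF => -[]. Qed.

Let cg_conj := cg_k (conj_irr irrF) irrD.

Lemma tens_intertwiner_eq0 b (A : G -> 'M[C]_b) psi : irr A -> (k.+2 < b)%N ->
  intertwiner D (tens_rep F A) psi -> psi = 0.
Proof.
move=> irrA lt_b /(intertwiner_tens_adjoint _ _ _ Fu) Hpsi.
have [_ cg_eq0 _] := cg_conj.
move: (cg_eq0 b A _ irrA lt_b Hpsi).
by rewrite -(@tens_reshape0 _ 2) => /tens_reshape_inj.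
Qed.

Lemma tens_intertwiner_line (A : G -> 'M[C]_k.+2) psi psi' : irr A ->
  intertwiner D (tens_rep F A) psi -> intertwiner D (tens_rep F A) psi' ->
  psi' != 0 -> exists c, psi = c *: psi'.
Proof.
move=> irrA /(intertwiner_tens_adjoint _ _ _ Fu) Hpsi
  /(intertwiner_tens_adjoint _ _ _ Fu) Hpsi' psi'n0.
have [_ _ /(_ A irrA) [Y0 _ [_ lineY0]]] := cg_conj.
have [c e] := lineY0 _ Hpsi; have [c' e'] := lineY0 _ Hpsi'.
have c'n0 : c' != 0.
  apply: contraNneq psi'n0 => c'0; apply/eqP/(@tens_reshape_inj _ 2).
  by rewrite e' c'0 scale0r tens_reshape0.
exists (c / c'); apply: (@tens_reshape_inj _ 2).
by rewrite tens_reshapeZ e' e scalerA divfK.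
Qed.

Lemma tens_intertwiner_exists (A : G -> 'M[C]_k.+2) : irr A ->
  exists2 psi, psi != 0 & intertwiner D (tens_rep F A) psi.
Proof.
move=> irrA; have [_ _ /(_ A irrA) [Y0 Y0n0 [HY0 _]]] := cg_conj.
exists (tens_unreshape Y0).
  by apply: contraNneq Y0n0 => e; rewrite -(tens_unreshapeK Y0) e tens_reshape0.
by apply/(intertwiner_tens_adjoint _ _ _ Fu); rewrite tens_unreshapeK.
Qed.

End Adjoint.

Section TensorDecomposition.
Variables (m : nat) (F : G -> 'M[C]_2) (A : G -> 'M[C]_m.+2) (D : G -> 'M[C]_m.+1).
Hypotheses (cg_le : forall k, (k <= m)%N -> clebsch_gordan k)
  (irrF : irr F) (irrA : irr A) (irrD : irr D).
Variable phi : 'M[C]_(m.+1, 2 * m.+2).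
Hypotheses (phi_neq0 : phi != 0) (phi_intw : intertwiner D (tens_rep F A) phi).

Let urepT : urep (tens_rep F A).
Proof. by case: irrF => ? _ _; case: irrA => ? _ _; apply: tens_urep. Qed.

(* The rule at levels < m kills intertwiners from V_d, d <= m, and at level m
   makes those from V_(m+1) proportional to phi. *)
Lemma irr_tens_sub_phi d (E : G -> 'M[C]_d) psi : irr E -> (d <= m.+1)%N ->
  intertwiner E (tens_rep F A) psi -> (psi <= phi)%MS.
Proof.
case: d E psi => [|k] E psi irrE le_k Hpsi; first by case: irrE.
have [lt_km|le_mk] := ltnP k m.
  have cg_k := cg_le (ltnW lt_km).
  by rewrite (tens_intertwiner_eq0 cg_k irrF irrE irrA _ Hpsi) ?sub0mx.
have ekm : k = m by apply/eqP; rewrite eqn_leq le_mk -ltnS le_k.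
subst k; have [Q Qu HQ] := irr_unique irrE irrD.
have QphiN0 : Q *m phi != 0.
  by apply: contraNneq phi_neq0 => e; rewrite -(mulKmx Qu phi) e mulmx0.
have [c ->] := tens_intertwiner_line (cg_le (leqnn m)) irrF irrE irrA Hpsi
  (intertwinerM HQ phi_intw) QphiN0.
by rewrite scalemx_sub // submxMl.
Qed.

Lemma irr_tens_ortho_phi (P : 'M[C]_(m.+3, 2 * m.+2)) :
  P \is unitarymx -> (P :=: phi^!)%MS -> irr (subrep (tens_rep F A) P).
Proof.
move=> Pu eqPphi.
have [_ Tu _] := urepT.
have invP : invariant (tens_rep F A) P.
  apply: eqmx_invariant (eqmx_sym eqPphi) _.
  exact: invariant_ortho Tu (intertwiner_img phi_intw).
have urepP := subrep_urep urepT Pu invP.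
split=> // U HU; have [->|Un0] := eqVneq U 0; first by left.
have [//|Unfull] := boolP (row_full U); [by right | exfalso].
have [_ subPu _] := urepP.
have [X HX [Xn0 rankX]] := exists_small_invariant subPu HU Un0 Unfull.
have HXP : invariant (tens_rep F A) (X *m P).
  by move=> g; rewrite -mulmxA -(subrep_intertwiner Pu invP) mulmxA submxMr.
have rankXP : \rank (X *m P) = \rank X.
  by rewrite mxrankMfree // /row_free mxrank_unitary.
have XPn0 : X *m P != 0 by rewrite -mxrank_eq0 rankXP mxrank_eq0.
have [d [E [psi [irrE le_d Hpsi psin0 psiXP]]]] := invariant_irr_sub urepT HXP XPn0.
have psi_phi : (psi <= phi)%MS.
  by apply: (irr_tens_sub_phi irrE _ Hpsi); move: le_d rankX; rewrite rankXP; lia.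
have psi_ortho : (psi <= phi^!)%MS.
  by apply: submx_trans psiXP _; rewrite -eqPphi submxMl.
have : (psi <= phi :&: phi^!)%MS by rewrite sub_capmx psi_phi psi_ortho.
by rewrite orthomx_ortho_disj submx0 (negPf psin0).
Qed.

Lemma irr_tens_phi_equiv (P : 'M[C]_(m.+1, 2 * m.+2)) :
  P \is unitarymx -> (P :=: phi)%MS ->
  exists2 Q, Q \in unitmx & intertwiner D (subrep (tens_rep F A) P) Q.
Proof.
move=> Pu eqPphi.
have /eqP rank_phi := irr_intertwiner_row_free irrD phi_intw phi_neq0.
have phiK : phi *m P^t* *m P = phi by apply: unitary_projK => //; rewrite eqPphi.
exists (phi *m P^t*).
  rewrite -row_full_unit /row_full eqn_leq rank_leq_col.
  by rewrite -{1}rank_phi -{1}phiK mxrankM_maxl.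
by move=> g; rewrite /subrep mulmxA phi_intw !mulmxA phiK.
Qed.

End TensorDecomposition.

Lemma tens_decomposition m (F : G -> 'M[C]_2) (A : G -> 'M[C]_m.+2)
    (D : G -> 'M[C]_m.+1) :
  (forall k, (k <= m)%N -> clebsch_gordan k) -> irr F -> irr A -> irr D ->
  let T := tens_rep F A in
  exists (P1 : 'M[C]_(m.+1, 2 * m.+2)) (P2 : 'M[C]_(m.+3, 2 * m.+2)),
  [/\ P1^t* *m P1 + P2^t* *m P2 = 1%:M, P1 \is unitarymx, P2 \is unitarymx,
      invariant T P1 & invariant T P2] /\
  irr (subrep T P2) /\
  exists2 Q, Q \in unitmx & intertwiner D (subrep T P1) Q.
Proof.
move=> cg_le irrF irrA irrD T.
have [phi phin0 Hphi] := tens_intertwiner_exists (cg_le m (leqnn m)) irrF irrD irrA.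
have [_ Tu _] : urep T.
  by case: irrF => ? _ _; case: irrA => ? _ _; apply: tens_urep.
have [r1 [r2 [P1 [P2 [er1 er12 P1u P2u [split1 eqP1 eqP2]]]]]] :=
  unitary_splitting phi.
move: er1 er12; rewrite (eqP (irr_intertwiner_row_free irrD Hphi phin0)).
move=> er1 er12; subst r1.
have er2 : r2 = m.+3 by lia.
subst r2; exists P1, P2; split; [split=> // | split].
- exact: eqmx_invariant (eqmx_sym eqP1) (intertwiner_img Hphi).
- exact: eqmx_invariant (eqmx_sym eqP2) (invariant_ortho Tu (intertwiner_img Hphi)).
- exact: (irr_tens_ortho_phi cg_le irrF irrA irrD phin0 Hphi P2u eqP2).
- exact: (irr_tens_phi_equiv irrD phin0 Hphi P1u eqP1).
Qed.

Lemma clebsch_gordanS m :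
  (forall k, (k <= m)%N -> clebsch_gordan k) -> clebsch_gordan m.+1.
Proof.
move=> cg_le F A irrF irrA; pose T := tens_rep F A.
have [D irrD] := irr_exists (ltn0Sn m).
have [P1 [P2 [[split P1u P2u inv1 inv2] [irr2 [Q Qu HQ]]]]] :=
  tens_decomposition cg_le irrF irrA irrD.
have HP1 := subrep_intertwiner P1u inv1; have HP2 := subrep_intertwiner P2u inv2.
have P1_eq0 b (B : G -> 'M[C]_b) Y :
    irr B -> m.+1 != b -> intertwiner T B Y -> P1 *m Y = 0.
  move=> irrB neq_b HY; rewrite -(mulKmx Qu (P1 *m Y)).
  have HQY := intertwinerM HQ (intertwinerM HP1 HY).
  by rewrite (irr_intertwiner_eq0 irrD irrB HQY) ?mulmx0.
have splitY b (Y : 'M[C]_(2 * m.+2, b)) :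
    Y = P1^t* *m (P1 *m Y) + P2^t* *m (P2 *m Y).
  by rewrite !mulmxA -mulmxDl split mul1mx.
split=> [B E g irrB irrE|b B Y irrB lt_b HY|B irrB].
- rewrite -/T -[T g]mulmx1 -split mulmxDr mxtraceD !mulmxA mxtrace_mulC.
  rewrite [X in _ + X]mxtrace_mulC !mulmxA addrC.
  rewrite -(irr_mxtrace g irrD irrE) (intertwiner_mxtrace g HQ Qu).
  by rewrite (irr_mxtrace g irr2 irrB).
- have neq1 : m.+1 != b by apply/eqP => e; rewrite -e in lt_b; lia.
  have neq3 : m.+3 != b by apply/eqP => e; rewrite -e in lt_b; lia.
  rewrite (splitY _ Y) (P1_eq0 b B Y) //.
  by rewrite (irr_intertwiner_eq0 irr2 irrB (intertwinerM HP2 HY)) // !mulmx0 addr0.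
- have [S Su HS] := irr_unique irr2 irrB.
  have urepT : urep T by case: irrF => ? _ _; case: irrA => ? _ _; apply: tens_urep.
  have [[_ Tu _] [_ P2Tu _]] := (urepT, subrep_urep urepT P2u inv2).
  exists (P2^t* *m S).
    apply: contraNneq (unitmx_neq0 Su) => e.
    by rewrite -[S]mul1mx -(unitarymxP P2u) -mulmxA e mulmx0.
  split=> [g|Y HY].
    by rewrite mulmxA (intertwiner_tC (P2Tu g) (Tu g) HP2) -mulmxA HS mulmxA.
  have [c e] := irr_intertwiner_line irr2 HS Su (intertwinerM HP2 HY).
  exists c; rewrite (splitY _ Y) (P1_eq0 _ B Y) //; last by rewrite neq_ltn ltnW.
  by rewrite mulmx0 add0r e scalemxAr.
Qed.

Lemma clebsch_gordan_all k : clebsch_gordan k.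
Proof.
elim/ltn_ind: k => -[_|k IHk]; first exact: clebsch_gordan0.
by apply: clebsch_gordanS => j le_j; apply: IHk.
Qed.

Lemma mxtrace_irr_cheb k (A : G -> 'M[C]_k.+1) (E : G -> 'M[C]_2) g :
  irr A -> irr E -> \tr (A g) = cheb (\tr (E g)) k.
Proof.
elim/ltn_ind: k A => -[|[|k]] IHk A irrA irrE.
- by rewrite irr1_trivial // mxtrace1 cheb0.
- by rewrite (irr_mxtrace g irrA irrE) cheb1.
have [A' irrA'] := irr_exists (isT : (0 < k.+2)%N).
have [A'' irrA''] := irr_exists (isT : (0 < k.+1)%N).
have [cg_trace _ _] := clebsch_gordan_all irrE irrA'.
rewrite chebSS -(IHk k.+1 _ A') // -(IHk k _ A'') // -mxtrace_tens.
by rewrite (cg_trace A A'' g irrA irrA'') addrK.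
Qed.

End ClebschGordan.
End Representations.

Theorem mainTheorem4 (G : topologicalType) (mul : G -> G -> G) (inv : G -> G)
    (one : G) (R : realType) :
  compact_group mul inv one ->
  (forall n : nat, (0 < n)%N -> exists D : G -> 'M[R[i]]_n, irrep mul D) ->
  (forall (n : nat) (D1 D2 : G -> 'M[R[i]]_n),
      irrep mul D1 -> irrep mul D2 -> rep_equiv D1 D2) ->
  forall (m : nat) (D : G -> 'M[R[i]]_m.+1) (E : G -> 'M[R[i]]_2),
    irrep mul D -> irrep mul E ->
    forall g : G,
      character D g =
        character E g ^+ m +
        \sum_(1 <= i < (m./2).+1)
           (-1) ^+ i * ('C(m - i, i))%:R * character E g ^+ (m - 2 * i).
Proof.
move=> _ irrep_exists irrep_unique m D E irrD irrE g.
have irr_exists n : (0 < n)%N -> exists M : G -> 'M[R[i]]_n, irr mul M.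
  by case/irrep_exists => D' /irrep_irr_tr irrD'; exists (fun g => (D' g)^T).
have irr_unique n (M1 M2 : G -> 'M[R[i]]_n) : irr mul M1 -> irr mul M2 ->
    exists2 Q, Q \in unitmx & intertwiner M1 M2 Q.
  move=> /irr_irrep_tr irr1 /irr_irrep_tr irr2.
  have [Q Qu HQ] := rep_equiv_intertwiner (irrep_unique n _ _ irr1 irr2).
  by exists Q => // h; have := HQ h; rewrite !trmxK.
rewrite /character -(mxtrace_tr (D g)) -(mxtrace_tr (E g)).
rewrite (mxtrace_irr_cheb irr_exists irr_unique g (irrep_irr_tr irrD)
  (irrep_irr_tr irrE)).
exact: cheb_half_sum.
Qed.
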